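(* Let $k\geq 2$ be an integer and let $A=[\bm{a}_1,\dots,\bm{a}_n]\in\mathbb{R}^{m\times n}$ have columns with $\|\bm{a}_i\|_2=1$ for all $i$, and suppose its mutual coherence $\mu=\max_{1\leq i<j\leq n}|\langle \bm{a}_i,\bm{a}_j\rangle|$ satisfies $$\mu<\frac{1}{k-1}.$$ Then for every vector $\bm{h}\in\mathbb{R}^n$ and every subset $E\subset\{1,\dots,n\}$ with $|E|=k$, $$\|\bm{h}_E\|_2\leq \alpha_1\|A\bm{h}\|_2+\alpha_2\|\bm{h}_{E^c}\|_1,$$ where $$\alpha_1=\frac{\sqrt{1+(k-1)\mu}}{1-(k-1)\mu},\qquad \alpha_2=\frac{\sqrt{k}\,\mu}{1-(k-1)\mu}.$$
   Context: For $E\subset\{1,\dots,n\}$, $E^c=\{1,\dots,n\}\setminus E$, and for a vector $\bm{h}\in\mathbb{R}^n$, $\bm{h}_E$ denotes the vector with $(\bm{h}_E)_i=\bm{h}_i$ for $i\in E$ and $(\bm{h}_E)_i=0$ otherwise. *)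

From mathcomp Require Import all_boot all_order all_algebra.
Set Implicit Arguments. Unset Strict Implicit. Unset Printing Implicit Defensive.
Import Order.TTheory GRing.Theory Num.Theory.
Local Open Scope ring_scope.

(* Vectors in R^n are column vectors 'cV[R]_n; indices {1..n} are 'I_n. *)

Definition dotv (R : rcfType) (n : nat) (u v : 'cV[R]_n) : R :=
  \sum_(i < n) u i 0 * v i 0.

Definition norm2 (R : rcfType) (n : nat) (u : 'cV[R]_n) : R :=
  Num.sqrt (dotv u u).

Definition norm1 (R : rcfType) (n : nat) (u : 'cV[R]_n) : R :=
  \sum_(i < n) `|u i 0|.

Definition restr (R : rcfType) (n : nat) (h : 'cV[R]_n) (E : {set 'I_n}) : 'cV[R]_n :=
  \col_i (if i \in E then h i 0 else 0).

(* mutual coherence: max_{i<j} |<a_i, a_j>| (0 if n <= 1) *)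
Definition coherence (R : rcfType) (m n : nat) (A : 'M[R]_(m, n)) : R :=
  \big[Num.max/0]_(i < n) \big[Num.max/0]_(j < n | (i < j)%N)
     `|dotv (col i A) (col j A)|.

From mathcomp Require Import all_boot all_order all_algebra ring lra.
Set Implicit Arguments. Unset Strict Implicit. Unset Printing Implicit Defensive.
Import Order.TTheory GRing.Theory Num.Theory.
Local Open Scope ring_scope.

(* With x := h_E and y := h_{E^c}, write the Gram entries of A as 1 on the
   diagonal and at most mu off it.  Since |E| = k, Cauchy-Schwarz gives
   ||x||_1 <= sqrt k ||x||_2, so
   (1 - (k-1) mu) ||x||^2 <= ||A x||^2 <= (1 + (k-1) mu) ||x||^2
   and |<A x, A y>| <= mu ||x||_1 ||y||_1 <= sqrt k mu ||x|| ||y||_1.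
   Expanding ||A x||^2 = <A x, A h> - <A x, A y> and bounding
   <A x, A h> <= ||A x|| ||A h|| yields
   (1 - (k-1) mu) ||x||^2 <= ||x|| (sqrt (1 + (k-1) mu) ||A h|| + sqrt k mu ||y||_1),
   and dividing by ||x|| gives the claim. *)

Lemma sum_mul_sum (R : comPzSemiRingType) (I J : finType) (f : I -> R) (g : J -> R) :
  (\sum_i f i) * (\sum_j g j) = \sum_i \sum_j f i * g j.
Proof. by rewrite big_distrl; apply: eq_bigr => i _; rewrite big_distrr. Qed.

Section Vectors.
Variables (R : rcfType) (n : nat).
Implicit Types (u v w h : 'cV[R]_n) (E : {set 'I_n}).

Lemma dotvC u v : dotv u v = dotv v u.
Proof. by apply: eq_bigr => i _; rewrite mulrC. Qed.

Lemma dotvDr u v w : dotv u (v + w) = dotv u v + dotv u w.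
Proof. by rewrite /dotv -big_split; apply: eq_bigr => i _; rewrite !mxE mulrDr. Qed.

Lemma dotvv_ge0 u : 0 <= dotv u u.
Proof. by apply: sumr_ge0 => i _; rewrite -expr2 sqr_ge0. Qed.

Lemma norm2_ge0 u : 0 <= norm2 u.
Proof. exact: sqrtr_ge0. Qed.

Lemma sqr_norm2 u : norm2 u ^+ 2 = dotv u u.
Proof. by rewrite sqr_sqrtr ?dotvv_ge0. Qed.

Lemma norm1_ge0 u : 0 <= norm1 u.
Proof. by apply: sumr_ge0 => i _; apply: normr_ge0. Qed.

Lemma lagrange_identity u v :
  \sum_i \sum_j (u i 0 * v j 0 - u j 0 * v i 0) ^+ 2
  = 2 * (dotv u u * dotv v v - dotv u v ^+ 2).
Proof.
have -> : \sum_i \sum_j (u i 0 * v j 0 - u j 0 * v i 0) ^+ 2 =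
    \sum_i \sum_j (u i 0 * u i 0 * (v j 0 * v j 0))
  + \sum_i \sum_j (v i 0 * v i 0 * (u j 0 * u j 0))
  - 2 * \sum_i \sum_j (u i 0 * v i 0 * (u j 0 * v j 0)).
  rewrite mulr_sumr -big_split -sumrB; apply: eq_bigr => i _.
  by rewrite mulr_sumr -big_split -sumrB; apply: eq_bigr => j _ /=; ring.
by rewrite -!sum_mul_sum /dotv; ring.
Qed.

Lemma dotv_le_norm2 u v : dotv u v <= norm2 u * norm2 v.
Proof.
have cs_sqr : dotv u v ^+ 2 <= dotv u u * dotv v v.
  have : 0 <= 2 * (dotv u u * dotv v v - dotv u v ^+ 2).
    by rewrite -lagrange_identity; do 2!apply: sumr_ge0 => ? _; apply: sqr_ge0.
  by rewrite pmulr_rge0 // subr_ge0.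
rewrite /norm2 -sqrtrM ?dotvv_ge0 // (le_trans (ler_norm _)) //.
by rewrite -sqrtr_sqr ler_sqrt ?mulr_ge0 ?dotvv_ge0.
Qed.

Lemma norm1_restr_le h E :
  norm1 (restr h E) <= Num.sqrt #|E|%:R * norm2 (restr h E).
Proof.
set x := restr h E.
pose absx : 'cV[R]_n := \col_i `|x i 0|.
pose indE : 'cV[R]_n := \col_i (i \in E)%:R.
have -> : norm1 x = dotv absx indE.
  by apply: eq_bigr => i _; rewrite !mxE; case: (i \in E); rewrite ?mulr1 ?mulr0 ?normr0.
have -> : norm2 x = norm2 absx.
  by congr Num.sqrt; apply: eq_bigr => i _; rewrite !mxE -normrM ger0_norm // -expr2 sqr_ge0.
have -> : Num.sqrt #|E|%:R = norm2 indE.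
  congr Num.sqrt; rewrite /dotv -sum1_card natr_sum big_mkcond /=.
  by apply: eq_bigr => i _; rewrite !mxE; case: (i \in E); rewrite ?mulr1 ?mulr0.
by rewrite mulrC dotv_le_norm2.
Qed.

Lemma restr_add_setC h E : restr h E + restr h (~: E) = h.
Proof.
by apply/matrixP => i j; rewrite (ord1 j) !mxE in_setC; case: (i \in E); rewrite ?addr0 ?add0r.
Qed.

Lemma restr_mul_setC h E i : restr h E i 0 * restr h (~: E) i 0 = 0.
Proof. by rewrite !mxE in_setC; case: (i \in E); rewrite ?mulr0 ?mul0r. Qed.

End Vectors.

Section Coherence.
Variables (R : rcfType) (m n : nat) (A : 'M[R]_(m, n)).
Implicit Types (u v h : 'cV[R]_n) (E : {set 'I_n}).
Local Notation mu := (coherence A).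
Local Notation gram i j := (dotv (col i A) (col j A)).

Lemma dotv_mulmx u v :
  dotv (A *m u) (A *m v) = \sum_i \sum_j u i 0 * v j 0 * gram i j.
Proof.
rewrite /dotv (eq_bigr (fun r => \sum_i \sum_j u i 0 * v j 0 * (A r i * A r j))).
  rewrite exchange_big; apply: eq_bigr => i _; rewrite exchange_big.
  by apply: eq_bigr => j _; rewrite mulr_sumr; apply: eq_bigr => r _; rewrite !mxE.
move=> r _; rewrite !mxE sum_mul_sum.
by apply: eq_bigr => i _; apply: eq_bigr => j _; ring.
Qed.

Lemma coherence_ge0 : 0 <= mu.
Proof. exact: bigmax_ge_id. Qed.

Lemma gram_le_coherence i j : i != j -> `|gram i j| <= mu.
Proof.
wlog lt_ij : i j / (i < j)%N.
  move=> lt_sym; case: (ltngtP i j) => [|gt_ij|/val_inj->]; last by rewrite eqxx.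
  - exact: lt_sym.
  - by rewrite dotvC eq_sym; apply: lt_sym.
move=> _; apply: le_trans (le_bigmax _ _ i).
exact: (le_bigmax_cond _ (fun j => `|gram i j|) lt_ij).
Qed.

Lemma dotv_mulmx_disjoint u v : (forall i, u i 0 * v i 0 = 0) ->
  `|dotv (A *m u) (A *m v)| <= mu * (norm1 u * norm1 v).
Proof.
move=> uv0; rewrite dotv_mulmx /norm1 sum_mul_sum mulr_sumr.
apply: le_trans (ler_norm_sum _ _ _) _; apply: ler_sum => i _; rewrite mulr_sumr.
apply: le_trans (ler_norm_sum _ _ _) _; apply: ler_sum => j _.
have [<-|ne_ij] := eqVneq i j.
  by rewrite uv0 mul0r normr0 mulr_ge0 ?coherence_ge0 ?mulr_ge0.
by rewrite normrM mulrC normrM ler_wpM2r ?mulr_ge0 ?normr_ge0 ?gram_le_coherence.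
Qed.

Hypothesis unit_col : forall i, norm2 (col i A) = 1.

Lemma gram_diag i : gram i i = 1.
Proof. by rewrite -sqr_norm2 unit_col expr1n. Qed.

(* Splitting the double sum into its diagonal, which reproduces ||u||^2, and
   the off-diagonal part, bounded by mu (||u||_1^2 - ||u||^2). *)
Lemma dotv_mulmx_dev u :
  `|dotv (A *m u) (A *m u) - dotv u u| <= mu * (norm1 u ^+ 2 - dotv u u).
Proof.
have diag (i : 'I_n) (F : 'I_n -> R) : \sum_j ((i == j)%:R * F j) = F i.
  rewrite (bigD1 i) //= eqxx mul1r big1 ?addr0 // => j.
  by rewrite eq_sym => /negbTE->; rewrite mul0r.
have -> : dotv u u = \sum_i \sum_j ((i == j)%:R * (u i 0 * u j 0)).
  by apply: eq_bigr => i _; rewrite diag.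
rewrite dotv_mulmx expr2 /norm1 sum_mul_sum -!sumrB mulr_sumr.
apply: le_trans (ler_norm_sum _ _ _) _; apply: ler_sum => i _.
rewrite -!sumrB mulr_sumr.
apply: le_trans (ler_norm_sum _ _ _) _; apply: ler_sum => j _.
have [<-|ne_ij] := eqVneq i j.
  rewrite /= mulr1n mul1r gram_diag mulr1 subrr normr0 -normrM ger0_norm.
    by rewrite subrr mulr0.
  by rewrite -expr2 sqr_ge0.
rewrite /= mulr0n !mul0r !subr0 normrM mulrC normrM.
by rewrite ler_wpM2r ?mulr_ge0 ?normr_ge0 ?gram_le_coherence.
Qed.

Lemma dotv_mulmx_restr_bounds h E :
  (1 - (#|E|%:R - 1) * mu) * dotv (restr h E) (restr h E)
    <= dotv (A *m restr h E) (A *m restr h E)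
    <= (1 + (#|E|%:R - 1) * mu) * dotv (restr h E) (restr h E).
Proof.
set x := restr h E; have norm1_sqr : norm1 x ^+ 2 <= #|E|%:R * dotv x x.
  apply: (le_trans (_ : _ <= (Num.sqrt #|E|%:R * norm2 x) ^+ 2)).
    by rewrite ler_sqr ?nnegrE ?mulr_ge0 ?sqrtr_ge0 ?norm2_ge0 ?norm1_ge0 ?norm1_restr_le.
  by rewrite exprMn sqr_sqrtr ?ler0n ?sqr_norm2.
have := dotv_mulmx_dev x; rewrite ler_norml => /andP[dev_lo dev_hi].
have mu0 := coherence_ge0.
have mu_norm1 : mu * norm1 x ^+ 2 <= mu * (#|E|%:R * dotv x x) by rewrite ler_wpM2l.
by apply/andP; split; lra.
Qed.

End Coherence.

Lemma le_div_of_mul_sqr (R : realFieldType) (c a b : R) :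
  0 < c -> 0 <= a -> 0 <= b -> c * a ^+ 2 <= a * b -> a <= b / c.
Proof.
move=> c0 a0 b0 cab; rewrite ler_pdivlMr //.
have [->|a_neq0] := eqVneq a 0; first by rewrite mul0r.
have a_gt0 : 0 < a by rewrite lt0r a_neq0.
by rewrite -(ler_pM2l a_gt0) mulrA -expr2 mulrC.
Qed.

Theorem lemma3 (R : rcfType) (m n k : nat) (A : 'M[R]_(m, n)) :
  (2 <= k)%N ->
  (forall i : 'I_n, norm2 (col i A) = 1) ->
  coherence A < 1 / (k%:R - 1) ->
  forall (h : 'cV[R]_n) (E : {set 'I_n}), #|E| = k ->
    let mu := coherence A in
    let alpha1 := Num.sqrt (1 + (k%:R - 1) * mu) / (1 - (k%:R - 1) * mu) in
    let alpha2 := Num.sqrt k%:R * mu / (1 - (k%:R - 1) * mu) in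
    norm2 (restr h E) <= alpha1 * norm2 (A *m h) + alpha2 * norm1 (restr h (~: E)).
Proof.
move=> k2 unit_col mu_lt h E cardE /=.
set mu := coherence A; set x := restr h E; set y := restr h (~: E).
set c := 1 - (k%:R - 1) * mu; set d := 1 + (k%:R - 1) * mu.
have mu0 : 0 <= mu := coherence_ge0 A.
have k1 : 1 < k%:R :> R by rewrite ltr1n.
have c0 : 0 < c by move: mu_lt; rewrite ltr_pdivlMr ?subr_gt0 // /c /mu; lra.
have d0 : 0 <= d by rewrite /d; nra.
have /andP[Ax_lo Ax_hi] := dotv_mulmx_restr_bounds unit_col h E.
rewrite cardE -/x -/c -/d in Ax_lo Ax_hi.
have Ax_le : norm2 (A *m x) <= Num.sqrt d * norm2 x.
  rewrite -ler_sqr ?nnegrE ?mulr_ge0 ?sqrtr_ge0 ?norm2_ge0 //.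
  by rewrite exprMn !sqr_norm2 sqr_sqrtr.
have x1_le : norm1 x <= Num.sqrt k%:R * norm2 x by rewrite -cardE norm1_restr_le.
have Axy_ge : - (mu * (norm1 x * norm1 y)) <= dotv (A *m x) (A *m y).
  exact/lerNnormlW/dotv_mulmx_disjoint/restr_mul_setC.
have Axh_split : dotv (A *m x) (A *m h) = dotv (A *m x) (A *m x) + dotv (A *m x) (A *m y).
  by rewrite -dotvDr -mulmxDr restr_add_setC.
have Axh_le : dotv (A *m x) (A *m h) <= Num.sqrt d * norm2 x * norm2 (A *m h).
  by rewrite (le_trans (dotv_le_norm2 _ _)) // ler_wpM2r ?norm2_ge0.
have Axy_le : mu * (norm1 x * norm1 y) <= mu * (Num.sqrt k%:R * norm2 x * norm1 y).
  by rewrite ler_wpM2l // ler_wpM2r ?norm1_ge0.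
have -> : Num.sqrt d / c * norm2 (A *m h) + Num.sqrt k%:R * mu / c * norm1 y =
          (Num.sqrt d * norm2 (A *m h) + Num.sqrt k%:R * mu * norm1 y) / c.
  by field; rewrite gt_eqF.
apply: le_div_of_mul_sqr; rewrite ?addr_ge0 ?mulr_ge0 ?sqrtr_ge0 ?norm2_ge0 ?norm1_ge0 //.
rewrite sqr_norm2; lra.
Qed.
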